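(* Let $n\ge2$. If $K$ is a bounded measurable set in $\mathbb{R}^n$, then $V(K^{\diamond\diamond})\ge V(K)$. If in addition $K$ is a star body, equality holds if and only if $K=K^{\diamond\diamond}$.
   Context: For $x,y\in\mathbb{R}^n$ let $[x,y]=\sqrt{|x|^2|y|^2-(x\cdot y)^2}$. The sine polar body of $K\subset\mathbb{R}^n$ is $K^{\diamond}=\{x\in\mathbb{R}^n:[x,y]\le1\text{ for all }y\in K\}$, and $K^{\diamond\diamond}=(K^{\diamond})^{\diamond}$. $V$ is volume. A star body is a set $\{ru:u\in S^{n-1},0\le r\le\rho(u)\}$ with $\rho:S^{n-1}\to(0,\infty)$ continuous. *)

(* R^n is modelled as row vectors 'rV[R]_n over R : realType. *)
From HB Require Import structures.
From mathcomp Require Import all_boot all_order all_algebra.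
From mathcomp Require Import all_classical all_reals all_analysis.
Set Implicit Arguments. Unset Strict Implicit. Unset Printing Implicit Defensive.
Import Order.TTheory GRing.Theory Num.Theory.
Import numFieldNormedType.Exports.
Local Open Scope classical_set_scope.
Local Open Scope ring_scope.

Section Defs.
Context {R : realType} {n : nat}.

Definition dotv (x y : 'rV[R]_n) : R := \sum_(i < n) x 0 i * y 0 i.
Definition sqnorm (x : 'rV[R]_n) : R := dotv x x.

Definition sinbr (x y : 'rV[R]_n) : R :=
  Num.sqrt (sqnorm x * sqnorm y - (dotv x y) ^+ 2).

Definition sine_polar (K : set 'rV[R]_n) : set 'rV[R]_n :=
  [set x | forall y, K y -> sinbr x y <= 1].

Definition box (a b : 'rV[R]_n) : set 'rV[R]_n :=
  [set x | forall i, a 0 i <= x 0 i <= b 0 i].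
Definition boxvol (a b : 'rV[R]_n) : R := \prod_(i < n) Num.max (b 0 i - a 0 i) 0.

(* n-dimensional Lebesgue (outer) measure: infimum of total volumes of
   countable covers by boxes.  On Lebesgue measurable sets this is the volume V. *)
Definition volume (A : set 'rV[R]_n) : \bar R :=
  ereal_inf [set s | exists a b : nat -> 'rV[R]_n,
     A `<=` \bigcup_k box (a k) (b k) /\
     s = (\sum_(0 <= k <oo) (boxvol (a k) (b k))%:E)%E].

Definition lebesgue_measurable (A : set 'rV[R]_n) : Prop :=
  volume.-caratheodory A.

Definition bounded_euclid (A : set 'rV[R]_n) : Prop :=
  exists M : R, forall x, A x -> sqnorm x <= M.

Definition unit_sphere : set 'rV[R]_n := [set u | sqnorm u = 1].

Definition star_body (K : set 'rV[R]_n) : Prop :=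
  exists rho : 'rV[R]_n -> R,
    (forall u, unit_sphere u -> 0 < rho u) /\
    {within unit_sphere, continuous rho} /\
    K = [set x | exists r u, unit_sphere u /\ 0 <= r <= rho u /\ x = r *: u].

End Defs.

(* Since [x,y] is symmetric, K is contained in its sine bipolar, whence the
   inequality.  Let K be a star body with radial function rho and suppose
   x0 = s u lies in K^dd but not in K, with |u| = 1, so that rho u < s.  Fix
   rho u < t < s.  For z in K^d we have [t u, z] = (t/s) [x0, z] <= t/s < 1,
   and K^d is bounded because K contains nonzero multiples of two distinct
   coordinate vectors (this is where n >= 2 is used); hence [y, z] <= 1
   uniformly in z for y near t u, i.e. a neighbourhood of t u lies in K^dd.
   Continuity of rho keeps K away from t u as well.  So a nondegenerate box
   lies in K^dd \ K, and measurability of K together with V(K) < oo gives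
   V(K^dd) = V(K) + V(K^dd \ K) > V(K).
   The lower bound on the volume of a box by its elementary volume is proved
   by induction on the dimension: slicing a countable cover along one
   coordinate and integrating the slices with one-dimensional Lebesgue
   measure. *)

From HB Require Import structures.
From mathcomp Require Import all_boot all_order all_algebra.
From mathcomp Require Import all_classical all_reals all_analysis.
From mathcomp Require Import measurable_realfun.
From mathcomp Require Import ring lra.
Set Implicit Arguments. Unset Strict Implicit. Unset Printing Implicit Defensive.
Import Order.TTheory GRing.Theory Num.Theory.
Import numFieldNormedType.Exports.
Local Open Scope classical_set_scope.
Local Open Scope ring_scope.

Section IntervalCover.
Variable R : realType.

Lemma indic_itvE (a b t : R) :
  \1_(`[a, b]) t = (if a <= t <= b then 1 else 0) :> R.
Proof.
rewrite indicE; case: ifP => h; first by rewrite mem_set //= in_itv /= h.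
by rewrite memNset //= in_itv /= h.
Qed.

Lemma indic_itv_ge0 (a b t : R) : 0 <= \1_(`[a, b]) t :> R.
Proof. by rewrite indic_itvE; case: ifP. Qed.

Lemma itv_length_le_cover (a b c : nat -> R) (al be h : R) :
  (forall k, 0 <= c k) -> 0 <= h -> al <= be ->
  (forall t, al <= t <= be ->
     (h%:E <= \sum_(k <oo) (c k * \1_(`[a k, b k]) t)%:E)%E) ->
  ((h * (be - al))%:E <= \sum_(k <oo) (c k * Num.max (b k - a k) 0)%:E)%E.
Proof.
move=> c_ge0 h_ge0 al_be cover.
have mI : measurable (`[al, be] : set R) by [].
have f_ge0 k t : (0 <= (c k * \1_(`[a k, b k]) t)%:E)%E.
  by rewrite lee_fin mulr_ge0 ?indic_itv_ge0.
have mf k : measurable_fun (`[al, be] : set R)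
    (fun t : R => ((c k * \1_(`[a k, b k]) t)%:E : \bar R)).
  by apply/measurable_EFinP; apply: measurable_funM.
have -> : ((h * (be - al))%:E = \int[lebesgue_measure]_(t in `[al, be]) (cst h%:E) t)%E.
  rewrite integral_cst //.
  have := lebesgue_measure_itv `[al, be]; rewrite /= lte_fin => ->.
  by case: ltgtP al_be => // -> _; rewrite subrr mulr0 mule0.
apply: (@le_trans _ _ (\int[lebesgue_measure]_(t in `[al, be])
    \sum_(k <oo) (c k * \1_(`[a k, b k]) t)%:E)%E).
  apply: ge0_le_integral => //.
  by apply: ge0_emeasurable_sum => k *; [exact: f_ge0 | exact: mf].
rewrite integral_nneseries //.
apply: lee_nneseries => [k _ _|k _]; first exact: integral_ge0.
have := integralZl_indic (m := lebesgue_measure) mI (fun=> `[a k, b k]%classic) (c k).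
rewrite /= => -> //; last by move=> /lt_le_trans/(_ (c_ge0 k)); rewrite ltxx.
rewrite integral_indic // EFinM lee_wpmul2l ?lee_fin //.
apply: le_trans (measureIl _ _ _) _ => //.
have := lebesgue_measure_itv `[a k, b k]; rewrite /= lte_fin => ->.
by case: ltP => ab; rewrite lee_fin le_max ?lexx ?orbT.
Qed.
End IntervalCover.

Section Euclidean.
Variables (R : realType) (n : nat).
Implicit Types (x y z d : 'rV[R]_n) (c : R).

Definition enorm x : R := Num.sqrt (sqnorm x).

Definition normalize x : 'rV[R]_n := (enorm x)^-1 *: x.

Definition sinbr2 x y : R := sqnorm x * sqnorm y - dotv x y ^+ 2.

Lemma dotvC x y : dotv x y = dotv y x.
Proof. by apply: eq_bigr => i _; rewrite mulrC. Qed.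

Lemma dotvDl x y z : dotv (x + y) z = dotv x z + dotv y z.
Proof. by rewrite /dotv -big_split; apply: eq_bigr => i _; rewrite mxE mulrDl. Qed.

Lemma dotvZl c x y : dotv (c *: x) y = c * dotv x y.
Proof. by rewrite /dotv mulr_sumr; apply: eq_bigr => i _; rewrite mxE mulrA. Qed.

Lemma dotvDr x y z : dotv z (x + y) = dotv z x + dotv z y.
Proof. by rewrite dotvC dotvDl !(dotvC z). Qed.

Lemma dotvZr c x y : dotv y (c *: x) = c * dotv y x.
Proof. by rewrite dotvC dotvZl dotvC. Qed.

Lemma sqnormZ c x : sqnorm (c *: x) = c ^+ 2 * sqnorm x.
Proof. by rewrite /sqnorm dotvZl dotvZr mulrA expr2. Qed.

Lemma sqnormD x y : sqnorm (x + y) = sqnorm x + 2 * dotv x y + sqnorm y.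
Proof. by rewrite /sqnorm dotvDl !dotvDr (dotvC y x); ring. Qed.

Lemma sqnorm_ge0 x : 0 <= sqnorm x.
Proof. by apply: sumr_ge0 => i _; rewrite -expr2 sqr_ge0. Qed.

Lemma sqnorm_eq0 x : (sqnorm x == 0) = (x == 0).
Proof.
apply/idP/eqP => [|->]; last by rewrite /sqnorm /dotv big1 // => i _; rewrite mxE mul0r.
rewrite psumr_eq0 => [/allP x0|i _]; last by rewrite -expr2 sqr_ge0.
apply/rowP => i; rewrite mxE; apply/eqP.
by have := x0 i (mem_index_enum _); rewrite mulf_eq0 orbb.
Qed.

Lemma enorm_ge0 x : 0 <= enorm x.
Proof. exact: sqrtr_ge0. Qed.

Lemma enorm_eq0 x : (enorm x == 0) = (x == 0).
Proof. by rewrite sqrtr_eq0 le_eqVlt ltNge sqnorm_ge0 orbF sqnorm_eq0. Qed.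

Lemma sqr_coord_le_sqnorm x i : x 0 i ^+ 2 <= sqnorm x.
Proof.
rewrite /sqnorm /dotv (bigD1 i) //= -expr2 lerDl.
by apply: sumr_ge0 => j _; rewrite -expr2 sqr_ge0.
Qed.

Lemma sqr_coord2_le_sqnorm x (i j : 'I_n) : i != j ->
  x 0 i ^+ 2 + x 0 j ^+ 2 <= sqnorm x.
Proof.
move=> ij; rewrite /sqnorm /dotv (bigD1 i) //= (bigD1 j) 1?eq_sym //=.
by rewrite -!expr2 addrA lerDl; apply: sumr_ge0 => k _; rewrite -expr2 sqr_ge0.
Qed.

Lemma normr_coord_le_enorm x i : `|x 0 i| <= enorm x.
Proof. by rewrite -sqrtr_sqr ler_sqrt ?sqnorm_ge0 // sqr_coord_le_sqnorm. Qed.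

Lemma enorm_scale_unit u c : unit_sphere u -> 0 <= c -> enorm (c *: u) = c.
Proof. by move=> u1 c_ge0; rewrite /enorm sqnormZ u1 mulr1 sqrtr_sqr ger0_norm. Qed.

Lemma normalize_scale_unit u c : unit_sphere u -> 0 < c -> normalize (c *: u) = u.
Proof.
move=> u1 c_gt0; rewrite /normalize enorm_scale_unit ?ltW // scalerA.
by rewrite mulVf ?scale1r // gt_eqF.
Qed.

Lemma enorm_normalize x : enorm x *: normalize x = x.
Proof.
have [->|x_neq0] := eqVneq x 0; first by rewrite /normalize !scaler0.
by rewrite /normalize scalerA mulfV ?scale1r ?enorm_eq0.
Qed.

Lemma unit_sphere_normalize x : x != 0 -> unit_sphere (normalize x).
Proof.
move=> x_neq0; rewrite /unit_sphere /= /normalize sqnormZ exprVn sqr_sqrtr ?sqnorm_ge0 //.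
by rewrite mulVf // sqnorm_eq0.
Qed.

Lemma normr_dotv_le x y (A B : R) : (forall i, `|x 0 i| <= A) ->
  (forall i, `|y 0 i| <= B) -> `|dotv x y| <= n%:R * (A * B).
Proof.
move=> xA yB; apply: le_trans (ler_norm_sum _ _ _) _.
apply: le_trans (_ : _ <= \sum_(i < n) (A * B)) _.
  by apply: ler_sum => i _; rewrite normrM ler_pM.
by rewrite big_const_ord iter_addr_0 mulr_natl.
Qed.

Lemma dotv_delta x (j : 'I_n) : dotv x (delta_mx 0 j) = x 0 j.
Proof.
rewrite /dotv (bigD1 j) //= mxE !eqxx mulr1 big1 ?addr0 // => i ij.
by rewrite mxE (negbTE ij) mulr0.
Qed.

Lemma sqnorm_delta (j : 'I_n) : sqnorm (delta_mx 0 j : 'rV[R]_n) = 1.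
Proof. by rewrite /sqnorm dotv_delta mxE !eqxx. Qed.

Lemma sinbr_le1 x y : (sinbr x y <= 1) = (sinbr2 x y <= 1).
Proof. by rewrite /sinbr -{1}sqrtr1 ler_sqrt. Qed.

Lemma sinbrC x y : sinbr x y = sinbr y x.
Proof. by rewrite /sinbr dotvC mulrC. Qed.

Lemma sinbr2Zl c x y : sinbr2 (c *: x) y = c ^+ 2 * sinbr2 x y.
Proof. by rewrite /sinbr2 sqnormZ dotvZl; ring. Qed.

Lemma sinbr2_addl x d z : sinbr2 (x + d) z = sinbr2 x z +
  (2 * dotv x d + sqnorm d) * sqnorm z - (2 * dotv x z + dotv d z) * dotv d z.
Proof. by rewrite /sinbr2 sqnormD dotvDl; ring. Qed.

Lemma sinbr2_addl_le x d z (X Z del : R) : 0 <= X -> 0 <= Z -> 0 <= del <= 1 ->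
  (forall i, `|x 0 i| <= X) -> (forall i, `|z 0 i| <= Z) ->
  (forall i, `|d 0 i| <= del) ->
  sinbr2 (x + d) z <= sinbr2 x z + del * (n%:R ^+ 2 * Z ^+ 2 * (4 * X + 1)).
Proof.
move=> X_ge0 Z_ge0 /andP[del_ge0 del_le1] xX zZ dD.
have xd := normr_dotv_le xX dD; have dd := normr_dotv_le dD dD.
have zz := normr_dotv_le zZ zZ; have xz := normr_dotv_le xX zZ.
have dz := normr_dotv_le dD zZ.
have del2 : del * del <= del by rewrite -[leRHS]mulr1 ler_wpM2l.
have lin : (2 * dotv x d + sqnorm d) * sqnorm z <=
    (2 * (n%:R * (X * del)) + n%:R * del) * (n%:R * (Z * Z)).
  apply: le_trans (ler_norm _) _; rewrite normrM ler_pM //.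
  apply: le_trans (ler_normD _ _) _; rewrite normrM ger0_norm // lerD ?ler_wpM2l //.
  by apply: le_trans dd _; rewrite ler_wpM2l.
have quad : - ((2 * dotv x z + dotv d z) * dotv d z) <=
    2 * (n%:R * (X * Z)) * (n%:R * (del * Z)).
  rewrite mulrDl opprD -[leRHS]addr0 lerD ?oppr_le0 -?expr2 ?sqr_ge0 //.
  rewrite -mulrA -mulrN -mulrA ler_wpM2l //.
  by apply: le_trans (ler_norm _) _; rewrite normrN normrM ler_pM.
rewrite sinbr2_addl; lra.
Qed.

End Euclidean.

Section BoxVolume.
Variables (R : realType) (n : nat).
Implicit Types (a b x : 'rV[R]_n).

Definition partial_box_indic (m : nat) a b x : R :=
  \prod_(i < n | (i < m)%N) \1_(`[a 0 i, b 0 i]) (x 0 i).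

Definition partial_boxvol (m : nat) a b : R :=
  \prod_(i < n | (i < m)%N) Num.max (b 0 i - a 0 i) 0.

Lemma partial_box_indic_ge0 m a b x : 0 <= partial_box_indic m a b x.
Proof. by apply: prodr_ge0 => i _; apply: indic_itv_ge0. Qed.

Lemma partial_boxvol_ge0 m a b : 0 <= partial_boxvol m a b.
Proof. by apply: prodr_ge0 => i _; rewrite le_max lexx orbT. Qed.

Lemma prodr_ord_ltS (F : 'I_n -> R) m (mn : (m < n)%N) :
  \prod_(i < n | (i < m.+1)%N) F i = F (Ordinal mn) * \prod_(i < n | (i < m)%N) F i.
Proof.
rewrite (bigD1 (Ordinal mn)) //=; congr (_ * _); apply: eq_bigl => i.
by rewrite ltnS [(i < m)%N]ltn_neqAle -val_eqE /= andbC.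
Qed.

Section Step.
Variables (m : nat) (mn : (m < n)%N).
Local Notation i0 := (Ordinal mn).

Lemma partial_boxvolS a b :
  partial_boxvol m.+1 a b = Num.max (b 0 i0 - a 0 i0) 0 * partial_boxvol m a b.
Proof. exact: prodr_ord_ltS. Qed.

Lemma partial_box_indic_set a b x t :
  partial_box_indic m.+1 a b (\row_j (if j == i0 then t else x 0 j)) =
  \1_(`[a 0 i0, b 0 i0]) t * partial_box_indic m a b x.
Proof.
rewrite /partial_box_indic prodr_ord_ltS mxE eqxx; congr (_ * _).
by apply: eq_bigr => i im; rewrite mxE; case: eqP => // ei; rewrite ei ltnn in im.
Qed.

End Step.

Lemma partial_boxvol_le_cover m : (m <= n)%N ->
  forall (w : nat -> R) (a b : nat -> 'rV[R]_n) (al be : 'rV[R]_n) (h : R),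
  (forall k, 0 <= w k) -> 0 <= h -> (forall i, al 0 i <= be 0 i) ->
  (forall x, (forall i : 'I_n, (i < m)%N -> al 0 i <= x 0 i <= be 0 i) ->
     (h%:E <= \sum_(k <oo) (w k * partial_box_indic m (a k) (b k) x)%:E)%E) ->
  ((h * partial_boxvol m al be)%:E <=
     \sum_(k <oo) (w k * partial_boxvol m (a k) (b k))%:E)%E.
Proof.
elim: m => [|m IH] mn w a b al be h w_ge0 h_ge0 al_be cover.
  have vol0 a' b' : partial_boxvol 0 a' b' = 1 by rewrite /partial_boxvol big_pred0.
  have indic0 a' b' x : partial_box_indic 0 a' b' x = 1.
    by rewrite /partial_box_indic big_pred0.
  have -> : (\sum_(k <oo) (w k * partial_boxvol 0 (a k) (b k))%:E =
      \sum_(k <oo) (w k * partial_box_indic 0 (a k) (b k) al)%:E)%E.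
    by apply: eq_eseriesr => k _; rewrite vol0 indic0.
  by rewrite vol0 mulr1; apply: cover.
set i0 := Ordinal mn.
(* On the slice x 0 i0 = t the cover restricts to the boxes containing t in
   coordinate i0, whose weights pick up the indicator of that coordinate. *)
have slice t : al 0 i0 <= t <= be 0 i0 ->
    ((h * partial_boxvol m al be)%:E <= \sum_(k <oo)
       (w k * partial_boxvol m (a k) (b k) * \1_(`[a k 0 i0, b k 0 i0]) t)%:E)%E.
  move=> t_in.
  have := IH (ltnW mn) (fun k => w k * \1_(`[a k 0 i0, b k 0 i0]) t) a b al be h.
  under eq_eseriesr do rewrite mulrAC.
  apply => // [k|x x_in]; first by rewrite mulr_ge0 ?indic_itv_ge0.
  under eq_eseriesr do rewrite -mulrA -partial_box_indic_set.
  apply: cover => i; rewrite ltnS leq_eqVlt mxE => /orP[/eqP ei|im].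
    have -> : i = i0 by apply: val_inj.
    by rewrite eqxx.
  by case: eqP => [ei|_]; [rewrite ei ltnn in im | apply: x_in].
rewrite partial_boxvolS (max_idPl (eqbRL (subr_ge0 _ _) (al_be i0))) mulrCA mulrC.
under eq_eseriesr do rewrite partial_boxvolS mulrCA [_ * (_ * _)]mulrC.
exact: itv_length_le_cover (fun k => mulr_ge0 (w_ge0 k) (partial_boxvol_ge0 _ _ _))
  (mulr_ge0 h_ge0 (partial_boxvol_ge0 m al be)) (al_be i0) slice.
Qed.
End BoxVolume.

Section Volume.
Variables (R : realType) (n : nat).
Implicit Types (A B : set 'rV[R]_n) (a b : 'rV[R]_n).

Lemma boxvolE a b : boxvol a b = partial_boxvol n a b.
Proof. by apply: eq_bigl => i; rewrite ltn_ord. Qed.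

Lemma boxvol_gt0 a b : (forall i, a 0 i < b 0 i) -> 0 < boxvol a b.
Proof. by move=> ab; apply: prodr_gt0 => i _; rewrite lt_max subr_gt0 ab. Qed.

Lemma volume_ge0 A : (0 <= volume A)%E.
Proof.
apply: le_ereal_inf_tmp => _ [a [b [_ ->]]].
by apply: nneseries_ge0 => k _ _; rewrite lee_fin boxvolE partial_boxvol_ge0.
Qed.

Lemma le_volume A B : A `<=` B -> (volume A <= volume B)%E.
Proof.
move=> AB; apply: ereal_inf_le_tmp => _ [a [b [cover ->]]].
by exists a, b; split => //; apply: subset_trans cover.
Qed.

Lemma boxvol_le_volume_box a b : (forall i, a 0 i <= b 0 i) ->
  ((boxvol a b)%:E <= volume (box a b))%E.
Proof.
move=> ab; apply: le_ereal_inf_tmp => _ [a' [b' [cover ->]]].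
rewrite boxvolE -[partial_boxvol _ _ _]mul1r.
under eq_eseriesr do rewrite boxvolE -[partial_boxvol _ _ _]mul1r.
apply: partial_boxvol_le_cover => // x x_in.
have [k _ xk] := cover x (fun i => x_in i (ltn_ord i)).
apply: le_trans (nneseries_lim_ge k.+1 _); last first.
  by move=> j _ _; rewrite lee_fin mul1r partial_box_indic_ge0.
rewrite big_nat_recr //= mul1r [X in (_ <= _ + X%:E)%E](_ : _ = 1); last first.
  by apply: big1 => i _; rewrite indic_itvE xk.
rewrite -[X in (X <= _)%E]add0e leeD2r //.
by apply: sume_ge0 => j _; rewrite lee_fin mul1r partial_box_indic_ge0.
Qed.

Lemma volume_box_le a b : (0 < n)%N -> (volume (box a b) <= (boxvol a b)%:E)%E.
Proof.
move=> n_gt0; apply: ge_ereal_inf; exists (boxvol a b)%:E => //.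
exists (fun k => a), (fun k => if k == 0%N then b else a); split.
  by move=> x x_in; exists 0%N.
rewrite (nneseries_split 0 1); last by move=> k _; rewrite lee_fin boxvolE partial_boxvol_ge0.
rewrite add0n big_nat1 /= eseries0 ?adde0 // => -[|k] //= _ _.
by rewrite /boxvol (bigD1 (Ordinal n_gt0)) //= subrr maxxx mul0r.
Qed.

Lemma volume_bounded_lty A : (0 < n)%N -> bounded_euclid A -> (volume A < +oo)%E.
Proof.
move=> n_gt0 [M AM]; set c := Num.sqrt M.
have sub : A `<=` box (const_mx (- c)) (const_mx c).
  move=> x Ax i; rewrite !mxE -ler_norml.
  apply: le_trans (normr_coord_le_enorm x i) _.
  by rewrite ler_sqrt ?AM // (le_trans (sqnorm_ge0 x) (AM x Ax)).
exact: le_lt_trans (le_volume sub) (le_lt_trans (volume_box_le _ _ n_gt0) (ltry _)).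
Qed.

End Volume.

Lemma caratheodory_lt (R : realType) (T : Type) (mu : set T -> \bar R) (A B : set T) :
  mu.-caratheodory A -> mu A \is a fin_num -> A `<=` B ->
  (0 < mu (B `&` ~` A))%E -> (mu A < mu B)%E.
Proof. by move=> Acar Afin AB; rewrite (Acar B) (setIidr AB) lteDl. Qed.

Section Neighbourhoods.
Variables (R : realType) (n : nat).
Implicit Types (x y : 'rV[R]_n) (P : 'rV[R]_n -> Prop).

Lemma near_coordP x P : (\forall y \near x, P y) <->
  exists2 e, 0 < e & forall y, (forall i, `|x 0 i - y 0 i| < e) -> P y.
Proof.
split=> [/nbhs_ballP[e e_gt0 xeP]|[e e_gt0 xeP]].
  by exists e => // y xy; apply: xeP; split => // i j; rewrite (ord1 i); apply: xy.
by apply/nbhs_ballP; exists e => // y [_ xy]; apply: xeP => i; apply: xy.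
Qed.

Lemma near_box_sub x P : (\forall y \near x, P y) ->
  exists a b : 'rV[R]_n, (forall i, a 0 i < b 0 i) /\ box a b `<=` P.
Proof.
move=> /near_coordP[e e_gt0 xeP].
exists (x - const_mx (e / 2)), (x + const_mx (e / 2)); split.
  by move=> i; rewrite !mxE; lra.
move=> y y_in; apply: xeP => i; have := y_in i; rewrite !mxE ltr_norml.
by move=> /andP[? ?]; apply/andP; split; lra.
Qed.
Lemma near_sine_polar (L : set 'rV[R]_n) x (Z q : R) : 0 <= Z ->
  (forall z, L z -> forall i, `|z 0 i| <= Z) -> q < 1 ->
  (forall z, L z -> sinbr2 x z <= q) -> \forall y \near x, sine_polar L y.
Proof.
move=> Z_ge0 LZ q_lt1 xq.
set C := n%:R ^+ 2 * Z ^+ 2 * (4 * enorm x + 1).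
have C_ge0 : 0 <= C by rewrite !mulr_ge0 ?sqr_ge0 ?addr_ge0 ?mulr_ge0 ?enorm_ge0.
set del := Num.min 1 ((1 - q) / (C + 1)).
have del_gt0 : 0 < del by rewrite lt_min ltr01 divr_gt0 ?subr_gt0 //; lra.
have del_le1 : del <= 1 by rewrite ge_min lexx.
have delC : del * C <= 1 - q.
  have : del <= (1 - q) / (C + 1) by rewrite ge_min lexx orbT.
  rewrite ler_pdivlMr; [nra | lra].
apply/near_coordP; exists del => // y xy z Lz.
have -> : y = x + (y - x) by rewrite addrC subrK.
have del_ge0 : 0 <= del <= 1 by rewrite ltW.
have yx i : `|(y - x) 0 i| <= del by rewrite !mxE distrC ltW.
rewrite sinbr_le1; apply: le_trans (sinbr2_addl_le (enorm_ge0 x) Z_ge0 del_ge0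
  (normr_coord_le_enorm x) (LZ z Lz) yx) _.
by rewrite -/C; have := xq z Lz; lra.
Qed.

Lemma sqnorm_continuous : continuous (@sqnorm R n).
Proof.
move=> x; rewrite /sqnorm /dotv.
apply: (@cvg_big _ _ _ _ _ add_continuous _ (nbhs x)) => i _.
by apply: cvgM; apply: coord_continuous.
Qed.

Lemma enorm_continuous : continuous (@enorm R n).
Proof.
by move=> x; apply: continuous_comp; [apply: sqnorm_continuous | apply: sqrt_continuous].
Qed.

Lemma normalize_continuous x : x != 0 -> {for x, continuous (@normalize R n)}.
Proof.
rewrite -enorm_eq0 => x_neq0.
exact: cvgZ (cvgV x_neq0 (@enorm_continuous x)) cvg_id.
Qed.

End Neighbourhoods.

Section SinePolar.
Variables (R : realType) (n : nat).
Implicit Types (K : set 'rV[R]_n) (z : 'rV[R]_n).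

Lemma subset_sine_polar2 K : K `<=` sine_polar (sine_polar K).
Proof. by move=> y Ky x Kx; rewrite sinbrC; apply: Kx. Qed.

(* A single axis c e_i only bounds the component of z orthogonal to e_i. *)
Lemma sqnorm_sine_polar_le K (i j : 'I_n) (c : R) : i != j ->
  K (c *: delta_mx 0 i) -> K (c *: delta_mx 0 j) ->
  forall z, sine_polar K z -> c ^+ 2 * sqnorm z <= 2.
Proof.
move=> ij Ki Kj z Kz.
have axis k : K (c *: delta_mx 0 k) -> c ^+ 2 * (sqnorm z - z 0 k ^+ 2) <= 1.
  by move=> /Kz; rewrite sinbr_le1 /sinbr2 sqnormZ sqnorm_delta dotvZr dotv_delta; lra.
have := axis i Ki; have := axis j Kj; have := sqr_coord2_le_sqnorm z ij.
have := sqr_ge0 c; nra.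
Qed.

End SinePolar.

Section RadialBody.
Variables (R : realType) (n : nat) (rho : 'rV[R]_n -> R).
Hypothesis rho_gt0 : forall u, unit_sphere u -> 0 < rho u.
Hypothesis rho_cont : {within unit_sphere, continuous rho}.

Definition radial_body : set 'rV[R]_n :=
  [set x | exists r u, unit_sphere u /\ 0 <= r <= rho u /\ x = r *: u].

Lemma radial_body_scale u r : unit_sphere u -> 0 <= r <= rho u -> radial_body (r *: u).
Proof. by move=> u1 r_in; exists r, u. Qed.

Lemma sine_polar_radial_body_bounded : (1 < n)%N ->
  exists2 Z, 0 <= Z & forall z, sine_polar radial_body z -> forall i, `|z 0 i| <= Z.
Proof.
move=> n_gt1; pose i0 := Ordinal (ltnW n_gt1); pose i1 := Ordinal n_gt1.
have e1 (j : 'I_n) : unit_sphere (delta_mx 0 j : 'rV[R]_n) by apply: sqnorm_delta.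
pose c := Num.min (rho (delta_mx 0 i0)) (rho (delta_mx 0 i1)).
have c_gt0 : 0 < c by rewrite lt_min !rho_gt0.
have Kc (j : 'I_n) : (j == i0) || (j == i1) -> radial_body (c *: delta_mx 0 j).
  move=> j01; apply: radial_body_scale => //; rewrite ltW //=.
  by case/orP: j01 => /eqP->; rewrite ge_min lexx ?orbT.
exists (Num.sqrt (2 / c ^+ 2)) => // z Kz i.
apply: le_trans (normr_coord_le_enorm z i) _.
rewrite ler_sqrt ?divr_ge0 ?sqr_ge0 // ler_pdivlMr ?exprn_gt0 // mulrC.
have i01 : i0 != i1 by [].
by apply: (sqnorm_sine_polar_le i01 (Kc i0 _) (Kc i1 _) Kz); rewrite eqxx ?orbT.
Qed.

Lemma near_notin_radial_body u t : unit_sphere u -> rho u < t ->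
  \forall x \near t *: u, ~ radial_body x.
Proof.
move=> u1 rho_lt.
have t_gt0 : 0 < t := lt_trans (rho_gt0 u1) rho_lt.
set eps := (t - rho u) / 2.
have eps_gt0 : 0 < eps by rewrite divr_gt0 // subr_gt0.
have tu_neq0 : t *: u != 0 by rewrite -enorm_eq0 enorm_scale_unit ?ltW // gt_eqF.
have near_enorm : \forall x \near t *: u, `|t - enorm x| < eps.
  have : enorm x @[x --> t *: u] --> t.
    by rewrite -[in X in _ --> X](enorm_scale_unit u1 (ltW t_gt0)); apply: enorm_continuous.
  by move=> /cvgrPdist_lt; apply.
have near_rho : \forall x \near t *: u,
    unit_sphere (normalize x) -> `|rho u - rho (normalize x)| < eps.
  have /cvgrPdist_lt/(_ eps eps_gt0) := (subspace_continuousP _ _).1 rho_cont u u1.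
  have : normalize x @[x --> t *: u] --> u.
    by rewrite -[in X in _ --> X](normalize_scale_unit u1 t_gt0); apply: normalize_continuous.
  by apply.
near=> x => -[r [v [v1 [/andP[r_ge0 r_le] x_eq]]]].
have : `|t - enorm x| < eps by near: x.
rewrite x_eq enorm_scale_unit // ltr_distlC => /andP[t_lt _].
have rho_u_gt0 := rho_gt0 u1.
have r_gt0 : 0 < r by rewrite /eps in t_lt; lra.
have : unit_sphere (normalize x) -> `|rho u - rho (normalize x)| < eps by near: x.
rewrite x_eq normalize_scale_unit // => /(_ v1); rewrite ltr_distlC => /andP[_ rho_v_lt].
rewrite /eps in t_lt rho_v_lt; lra.
Unshelve. all: by end_near.
Qed.

Lemma sine_polar2_diff_box x0 : (1 < n)%N ->
  sine_polar (sine_polar radial_body) x0 -> ~ radial_body x0 ->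
  exists a b : 'rV[R]_n, (forall i, a 0 i < b 0 i) /\
    box a b `<=` sine_polar (sine_polar radial_body) `&` ~` radial_body.
Proof.
move=> n_gt1 x0_in x0_notin.
have x0_neq0 : x0 != 0.
  apply/eqP => x0_eq0; apply: x0_notin; pose e : 'rV[R]_n := delta_mx 0 (Ordinal n_gt1).
  have e1 : unit_sphere e by apply: sqnorm_delta.
  by rewrite x0_eq0 -(scale0r e); apply: radial_body_scale; rewrite // lexx ltW ?rho_gt0.
set s := enorm x0; set u := normalize x0.
have u1 : unit_sphere u := unit_sphere_normalize x0_neq0.
have s_gt0 : 0 < s by rewrite lt_def enorm_eq0 x0_neq0 enorm_ge0.
have x0E : x0 = s *: u by rewrite enorm_normalize.
have rho_lt : rho u < s.
  rewrite ltNge; apply/negP => rho_ge; apply: x0_notin.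
  by rewrite x0E; apply: radial_body_scale; rewrite // ltW.
have rho_u_gt0 := rho_gt0 u1.
set t := (rho u + s) / 2.
have [Z Z_ge0 KZ] := sine_polar_radial_body_bounded n_gt1.
apply: (near_box_sub (x := t *: u)); near=> y; split.
- near: y; apply: (near_sine_polar Z_ge0 KZ (q := (t / s) ^+ 2)).
    have ts_ge0 : 0 <= t / s by rewrite divr_ge0 // /t; lra.
    by rewrite exprn_ilt1 // ltr_pdivrMr // mul1r /t; lra.
  move=> z Kz; have -> : t *: u = (t / s) *: x0 by rewrite x0E scalerA mulfVK ?gt_eqF.
  rewrite sinbr2Zl -[leRHS]mulr1 ler_wpM2l ?sqr_ge0 // -sinbr_le1.
  exact: x0_in.
- by near: y; apply: near_notin_radial_body; rewrite // /t; lra.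
Unshelve. all: by end_near.
Qed.

End RadialBody.

Theorem lemma5p1 (R : realType) (n : nat) (hn : (2 <= n)%N) (K : set 'rV[R]_n) :
  bounded_euclid K -> lebesgue_measurable K ->
  (volume K <= volume (sine_polar (sine_polar K)))%E /\
  (star_body K ->
     (volume (sine_polar (sine_polar K)) = volume K <-> K = sine_polar (sine_polar K))).
Proof.
move=> K_bounded K_meas; have K_sub := @subset_sine_polar2 _ _ K.
split=> [|[rho [rho_gt0 [rho_cont K_eq]]]]; first exact: le_volume.
split=> [vol_eq|<-] //; apply/seteqP; split=> // x x_in; apply: contrapT => x_notin.
have [a [b [ab box_sub]]] : exists a b : 'rV[R]_n, (forall i, a 0 i < b 0 i) /\
    box a b `<=` sine_polar (sine_polar K) `&` ~` K.
  rewrite K_eq in x_in x_notin *.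
  exact: (sine_polar2_diff_box rho_gt0 rho_cont hn x_in x_notin).
have K_fin : volume K \is a fin_num.
  by rewrite ge0_fin_numE ?volume_ge0 // volume_bounded_lty // ltnW.
have diff_pos : (0 < volume (sine_polar (sine_polar K) `&` ~` K))%E.
  apply: lt_le_trans (le_volume box_sub).
  apply: lt_le_trans (boxvol_le_volume_box (fun i => ltW (ab i))).
  by rewrite lte_fin boxvol_gt0.
by have := caratheodory_lt K_meas K_fin K_sub diff_pos; rewrite vol_eq ltxx.
Qed.
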